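(* Let $\beta\in\mathbb{R}^n_{>}$ and $\theta\in\Theta^\beta$, with agents indexed so that $v_1(\theta_1)\ge v_2(\theta_2)\ge\dots\ge v_n(\theta_n)$ (and $v_{n+1}(\theta_{n+1}):=0$). Then every efficient Nash equilibrium of $\mathbf{1}$-GSP for $\theta$ yields revenue at least $$\frac12\left(R(\theta)-\sum_{j=1}^{k}(\beta_j-\beta_{j+1})\cdot v_{j+1}(\theta_{j+1})\right).$$
   Context: Sponsored search setting: agents $N=\{1,\dots,n\}$, slots $1,\dots,k$ with $k\le n$; an outcome assigns agents to distinct positions, position $j\le k$ meaning slot $j$, others getting nothing (value 0); utilities quasilinear. $\mathbb{R}^n_{>}$: vectors $\beta$ with $1=\beta_1>\dots>\beta_k>0$ and $\beta_j=0$ for $j>k$ (so $\beta_{k+1}=0$). $\Theta^\beta$: type profiles in which agent $i$ has $v_i(\theta_i)\ge0$ and values slot $j$ at $\beta_j v_i(\theta_i)$. VCG outcome for $\theta$: the assignment and Clarke payments of the VCG mechanism (bids on every slot, bid-maximizing assignment) under truthful bids; $R(\theta)$ is its revenue. $\mathbf{1}$-GSP: each agent submits a single $b_i\ge0$ used as its bid on every slot; agents are ranked by $b_i$ (ties arbitrary), the rank-$j$ agent ($j\le k$) gets slot $j$ and pays the $(j+1)$-st highest submitted value ($0$ if none). Revenue = sum of payments. A Nash equilibrium (complete information, for $\theta$) is a profile of submissions from which no agent gains strictly by unilateral deviation; it is efficient if its assignment maximizes $\sum_i$ (true value of agent $i$ for its assigned slot). *)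

From mathcomp Require Import all_boot all_order all_algebra all_fingroup.
Set Implicit Arguments. Unset Strict Implicit. Unset Printing Implicit Defensive.
Import Order.TTheory GRing.Theory Num.Theory.
Local Open Scope ring_scope.

(* Agents are 'I_n (0-indexed), positions are 0-indexed ranks r : 'I_n;
   position r < k is slot r+1 of the paper.  A ranking s : {perm 'I_n}
   maps a rank to the agent occupying it. beta : nat -> R, beta r is the
   paper's beta_{r+1}. *)
Section Auction.
Variables (R : realFieldType) (n k : nat).

Definition pos (s : {perm 'I_n}) (i : 'I_n) : nat := s^-1%g i.

Definition beta_ok (beta : nat -> R) : Prop :=
  [/\ beta 0%N = 1,
      (forall j : nat, (j.+1 < k)%N -> beta j.+1 < beta j),
      0 < beta k.-1
    & (forall j : nat, (k <= j)%N -> beta j = 0)].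

(* value of the submission at rank r+1 (0 if there is none), i.e. the
   (r+2)-nd highest submitted value in 1-indexed terms *)
Definition next_bid (b : 'I_n -> R) (s : {perm 'I_n}) (r : nat) : R :=
  match (insub r.+1 : option 'I_n) with Some r' => b (s r') | None => 0 end.

Definition gsp_revenue (b : 'I_n -> R) (s : {perm 'I_n}) : R :=
  \sum_(r < n | (r < k)%N) next_bid b s r.

Definition gsp_utility (beta : nat -> R) (v : 'I_n -> R) (b : 'I_n -> R)
  (s : {perm 'I_n}) (i : 'I_n) : R :=
  if (pos s i < k)%N then beta (pos s i) * v i - next_bid b s (pos s i)
  else 0.

Definition consistent_ranking (b : 'I_n -> R) (s : {perm 'I_n}) : Prop :=
  forall r1 r2 : 'I_n, (r1 <= r2)%N -> b (s r2) <= b (s r1).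

Definition tie_rule (tb : ('I_n -> R) -> {perm 'I_n}) : Prop :=
  forall b, consistent_ranking b (tb b).

Definition upd (b : 'I_n -> R) (i : 'I_n) (x : R) : 'I_n -> R :=
  fun j => if j == i then x else b j.

Definition gsp_nash (beta : nat -> R) (v : 'I_n -> R)
  (tb : ('I_n -> R) -> {perm 'I_n}) (b : 'I_n -> R) : Prop :=
  (forall i, 0 <= b i) /\
  (forall (i : 'I_n) (x : R), 0 <= x ->
     gsp_utility beta v (upd b i x) (tb (upd b i x)) i
       <= gsp_utility beta v b (tb b) i).

Definition welfare (beta : nat -> R) (v : 'I_n -> R) (s : {perm 'I_n}) : R :=
  \sum_(i : 'I_n) beta (pos s i) * v i.

Definition efficient (beta : nat -> R) (v : 'I_n -> R) (s : {perm 'I_n}) : Prop :=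
  forall t : {perm 'I_n}, welfare beta v t <= welfare beta v s.

(* VCG with Clarke payments (truthful bids) *)
Definition welfare_others (beta : nat -> R) (v : 'I_n -> R)
  (s : {perm 'I_n}) (i : 'I_n) : R :=
  \sum_(a : 'I_n | a != i) beta (pos s a) * v a.

(* optimal welfare of the economy without agent i (all terms are >= 0) *)
Definition opt_without (beta : nat -> R) (v : 'I_n -> R) (i : 'I_n) : R :=
  \big[Num.max/0]_(s : {perm 'I_n}) welfare_others beta v s i.

Definition clarke_payment (beta : nat -> R) (v : 'I_n -> R)
  (s : {perm 'I_n}) (i : 'I_n) : R :=
  opt_without beta v i - welfare_others beta v s i.

Definition vcg_revenue (beta : nat -> R) (v : 'I_n -> R) (s : {perm 'I_n}) : R :=
  \sum_(i : 'I_n) clarke_payment beta v s i.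

(* v extended by 0 beyond agent n (paper's v_{n+1} := 0) *)
Definition vext (v : 'I_n -> R) (m : nat) : R :=
  match (insub m : option 'I_n) with Some i => v i | None => 0 end.

End Auction.

From mathcomp Require Import all_boot all_order all_algebra all_fingroup.
From mathcomp Require Import zify ring lra.
Import Order.TTheory GRing.Theory Num.Theory.
Set Implicit Arguments. Unset Strict Implicit. Unset Printing Implicit Defensive.
Local Open Scope ring_scope.

(* With c_p := (beta_p - beta_(p+1)) v_(p+1) (ranks from 0), the paper's VCG revenue is
   sum_p (p+1) c_p; Abel summation over the layers beta_q - beta_(q+1) shows that VCG earns at
   most this much.  In an efficient equilibrium the agent at rank l+1 (worth at least v_(l+1))
   does not want to outbid rank l, so b_l >= c_l + b_(l+2); for the last slot an unassigned agent
   among the k+1 best plays this role.  Hence the bid at rank l dominates the alternating sum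
   c_l + c_(l+2) + ..., and summing two consecutive alternating sums over the paid ranks gives
   2 * revenue >= sum_p p c_p. *)

Section SlotFactors.
Variables (R : realFieldType) (k : nat) (beta : nat -> R).
Hypothesis hbeta : beta_ok k beta.

Lemma beta_succ_le p : beta p.+1 <= beta p.
Proof.
have [_ beta_dec beta_last beta_out] := hbeta.
case: (ltnP p.+1 k) => hp; first exact/ltW/beta_dec.
rewrite beta_out //; case: (ltnP p k) => hpk; last by rewrite beta_out.
have -> : p = k.-1 by lia.
exact: ltW.
Qed.

Lemma beta_nonincr : {homo beta : p q / (p <= q)%N >-> q <= p}.
Proof.
apply: homo_leq => [x | y x z hxy hyz | p]; [exact: lexx | exact: le_trans hyz hxy |].
exact: beta_succ_le.
Qed.

Lemma beta_gt0 p : (p < k)%N -> 0 < beta p.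
Proof.
move=> hp; have [_ _ beta_last _] := hbeta.
by apply: lt_le_trans beta_last (beta_nonincr _); lia.
Qed.

Lemma beta_ge0 p : 0 <= beta p.
Proof.
have [_ _ _ beta_out] := hbeta.
by case: (ltnP p k) => hp; [exact/ltW/beta_gt0 | rewrite beta_out].
Qed.

Lemma beta_gap_ge0 p : 0 <= beta p - beta p.+1.
Proof. by rewrite subr_ge0 beta_succ_le. Qed.

Lemma beta_decr p q : (p < q)%N -> (p < k)%N -> beta q < beta p.
Proof.
move=> hpq hpk; apply: le_lt_trans (beta_nonincr hpq) _.
have [_ beta_dec _ beta_out] := hbeta.
case: (ltnP p.+1 k) => hp; first exact: beta_dec.
by rewrite beta_out // beta_gt0.
Qed.

Lemma beta_telescope p : beta p = \sum_(q < k | (p <= q)%N) (beta q - beta q.+1).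
Proof.
have [_ _ _ beta_out] := hbeta.
case: (ltnP p k) => hp; last first.
  rewrite beta_out // big_pred0 // => q.
  by apply/negbTE; rewrite -ltnNge (leq_trans (ltn_ord q)).
have -> : \sum_(q < k | (p <= q)%N) (beta q - beta q.+1) =
          \sum_(p <= q < k) (beta q - beta q.+1) by rewrite big_geq_mkord.
rewrite -[RHS]opprK -sumrN.
under eq_big_nat => q _ do rewrite opprB.
by rewrite telescope_sumr ?(ltnW hp) // (beta_out k) // sub0r opprK.
Qed.

Lemma sum_beta_layers (I : finType) (P : pred I) (g : I -> nat) (f : I -> R) :
  \sum_(a | P a) beta (g a) * f a =
  \sum_(q < k) (beta q - beta q.+1) * \sum_(a in [set a | P a && (g a <= q)%N]) f a.
Proof.
under eq_bigr => a _ do rewrite beta_telescope mulr_suml big_mkcond.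
rewrite exchange_big; apply: eq_bigr => q _.
rewrite mulr_sumr [RHS](eq_bigl (fun a => P a && (g a <= q)%N)) ?big_mkcondr //.
by move=> a; rewrite inE.
Qed.

End SlotFactors.

Definition ord_prefix n m : {set 'I_n} := [set a : 'I_n | (a < m)%N].

Section Ranks.
Variable n : nat.

Lemma ord_prefixS_lt m (hm : (m < n)%N) : ord_prefix n m.+1 = Ordinal hm |: ord_prefix n m.
Proof. by apply/setP => a; rewrite !inE ltnS leq_eqVlt. Qed.

Lemma ord_prefixS_ge m : (n <= m)%N -> ord_prefix n m.+1 = ord_prefix n m.
Proof. by move=> hm; apply/setP => a; rewrite !inE; have := ltn_ord a; lia. Qed.

Lemma card_ord_prefix m : #|ord_prefix n m| = minn m n.
Proof.
elim: m => [|m IH].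
  by rewrite min0n; apply/eqP; rewrite cards_eq0; apply/eqP/setP => a; rewrite !inE.
case: (ltnP m n) => hm; last by rewrite ord_prefixS_ge // IH; lia.
by rewrite ord_prefixS_lt cardsU1 IH inE /= ltnn /=; lia.
Qed.

Lemma card_pos_lt (s : {perm 'I_n}) m : #|[set a | (pos s a < m)%N]| = minn m n.
Proof.
have -> : [set a | (pos s a < m)%N] = (s^-1)%g @^-1: ord_prefix n m.
  by apply/setP => a; rewrite !inE.
by rewrite card_preimset ?card_ord_prefix //; apply: perm_inj.
Qed.

Lemma exists_prefix_agent_ranked_late (s : {perm 'I_n}) r : (r < n)%N ->
  exists a : 'I_n, (a <= r)%N /\ (r <= pos s a)%N.
Proof.
move=> hr.
case: (boolP [exists a : 'I_n, (a <= r)%N && (r <= pos s a)%N]) =>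
  [/existsP [a /andP [h1 h2]] | /existsPn hnone]; first by exists a.
have : ord_prefix n r.+1 \subset [set a | (pos s a < r)%N].
  apply/subsetP => a; rewrite !inE ltnS => ha.
  by have := hnone a; rewrite ha /= -ltnNge.
by move/subset_leq_card; rewrite card_ord_prefix card_pos_lt; lia.
Qed.

End Ranks.

Lemma sum_le_exchange (R : realFieldType) (T : finType) (f : T -> R) (A B : {set T}) :
  (forall x, 0 <= f x) -> (#|A| <= #|B|)%N ->
  (forall x y, x \notin B -> y \in B -> f x <= f y) ->
  \sum_(x in A) f x <= \sum_(x in B) f x.
Proof.
move=> f_ge0 hAB f_le.
rewrite (big_setID B) [leRHS](big_setID A) setIC lerD2l.
have hcard : (#|A :\: B| <= #|B :\: A|)%N.
  by have := cardsID B A; have := cardsID A B; rewrite setIC; lia.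
set A' := A :\: B in hcard *; set B' := B :\: A in hcard *.
have double_count : (\sum_(x in A') f x) * #|B'|%:R <= (\sum_(y in B') f y) * #|A'|%:R.
  have -> : (\sum_(x in A') f x) * #|B'|%:R = \sum_(x in A') \sum_(y in B') f x.
    by rewrite mulr_suml; apply: eq_bigr => x _; rewrite sumr_const mulr_natr.
  have -> : (\sum_(y in B') f y) * #|A'|%:R = \sum_(x in A') \sum_(y in B') f y.
    by rewrite exchange_big mulr_suml; apply: eq_bigr => y _; rewrite sumr_const mulr_natr.
  apply: ler_sum => x; rewrite inE => /andP [hx _].
  by apply: ler_sum => y; rewrite inE => /andP [_ hy]; apply: f_le.
have hB'0 : 0 <= \sum_(y in B') f y by apply: sumr_ge0.
case: (posnP #|B'|) => hB'.
  have /eqP : #|A'| = 0%N by lia.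
  by rewrite cards_eq0 => /eqP ->; rewrite big_set0.
have hnat : (#|A'|%:R <= #|B'|%:R :> R) by rewrite ler_nat.
have hpos : (0 < #|B'|%:R :> R) by rewrite ltr0n.
nra.
Qed.

Section SortedValues.
Variables (R : realFieldType) (n : nat) (v : 'I_n -> R).
Hypothesis hv0 : forall i, 0 <= v i.
Hypothesis hv_sorted : forall i j : 'I_n, (i <= j)%N -> v j <= v i.

Lemma vextE m (hm : (m < n)%N) : vext v m = v (Ordinal hm).
Proof. by rewrite /vext insubT. Qed.

Lemma vext_out m : (n <= m)%N -> vext v m = 0.
Proof. by move=> hm; rewrite /vext insubF // ltnNge hm. Qed.

Lemma vext_ge0 m : 0 <= vext v m.
Proof. by rewrite /vext; case: insub. Qed.

Definition prefix_sum m := \sum_(a in ord_prefix n m) v a.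

Lemma prefix_sumS m : prefix_sum m.+1 = prefix_sum m + vext v m.
Proof.
rewrite /prefix_sum; case: (ltnP m n) => hm; last by rewrite ord_prefixS_ge ?vext_out ?addr0.
by rewrite ord_prefixS_lt big_setU1 ?inE ?ltnn //= addrC vextE.
Qed.

Lemma sum_le_prefix_sum (A : {set 'I_n}) m : (#|A| <= m)%N -> \sum_(a in A) v a <= prefix_sum m.
Proof.
move=> hA; apply: sum_le_exchange => //.
- by rewrite card_ord_prefix; have := max_card A; rewrite card_ord; lia.
- by move=> x y; rewrite !inE -leqNgt => hx hy; apply: hv_sorted; lia.
Qed.

Definition prefix_sum_without (i : 'I_n) m :=
  if (i < m)%N then prefix_sum m.+1 - v i else prefix_sum m.

Lemma sum_le_prefix_sum_without i (A : {set 'I_n}) m : i \notin A -> (#|A| <= m)%N ->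
  \sum_(a in A) v a <= prefix_sum_without i m.
Proof.
move=> hi hA; rewrite /prefix_sum_without; case: ifP => _; last exact: sum_le_prefix_sum.
rewrite lerBrDr addrC -big_setU1 //=; apply: sum_le_prefix_sum.
by rewrite cardsU1 hi.
Qed.

Lemma sum_prefix_sum_without m : (m <= n)%N ->
  \sum_i prefix_sum_without i m = (n%:R - 1) * prefix_sum m + m%:R * vext v m.
Proof.
move=> hm.
transitivity (\sum_(i : 'I_n) (prefix_sum m + (if (i < m)%N then vext v m - v i else 0))).
  apply: eq_bigr => i _; rewrite /prefix_sum_without prefix_sumS.
  by case: ifP => _; rewrite ?addr0 ?addrA.
rewrite big_split /= sumr_const card_ord -big_mkcond /=.
rewrite (eq_bigl (fun i => i \in ord_prefix n m)); last by move=> i; rewrite inE.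
rewrite sumrB sumr_const card_ord_prefix (minn_idPl hm) -/(prefix_sum m).
rewrite -[prefix_sum m *+ n]mulr_natl -[vext v m *+ m]mulr_natl.
by rewrite mulrBl mul1r addrA [_ - _ + _]addrAC.
Qed.

End SortedValues.

Lemma welfare_ranks (R : realFieldType) n (beta : nat -> R) (v : 'I_n -> R) (s : {perm 'I_n}) :
  welfare beta v s = \sum_(r : 'I_n) beta r * v (s r).
Proof.
rewrite /welfare (reindex_inj (@perm_inj _ s)) /=.
by apply: eq_bigr => r _; rewrite /pos permK.
Qed.

Lemma big_tperm (R : realFieldType) (T : finType) (F : T -> T -> R) (x y : T) : x != y ->
  \sum_z F z (tperm x y z) = \sum_z F z z + (F x y + F y x - F x x - F y y).
Proof.
move=> hxy.
rewrite (bigD1 x) // (bigD1 y) 1?eq_sym //= [in RHS](bigD1 x) // [in RHS](bigD1 y) 1?eq_sym //=.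
rewrite tpermL tpermR.
under eq_bigr => z /andP [hzx hzy] do rewrite tpermD 1?eq_sym //.
by rewrite addrC; ring.
Qed.

(* If a better agent sat below slot [r], swapping it into slot [r] would raise the welfare. *)
Lemma efficient_slot_value_ge (R : realFieldType) n k (beta : nat -> R) (v : 'I_n -> R)
    (hbeta : beta_ok k beta) (hv_sorted : forall i j : 'I_n, (i <= j)%N -> v j <= v i)
    (s : {perm 'I_n}) (heff : efficient beta v s) (r : 'I_n) :
  (r < k)%N -> v r <= v (s r).
Proof.
move=> hrk; rewrite leNgt; apply/negP => hlt.
have [a [har hra]] := exists_prefix_agent_ranked_late s (ltn_ord r).
have hva : v r <= v a by apply: hv_sorted.
set p := (s^-1)%g a; have hsp : s p = a by rewrite /p permKV.
have hrp : (r < p)%N.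
  rewrite ltn_neqAle hra andbT; apply/eqP => /val_inj hr.
  by move: hlt hva; rewrite hr hsp; lra.
have hbeta_rp : beta p < beta r := beta_decr hbeta hrp hrk.
have := heff (tperm r p * s)%g; rewrite !welfare_ranks.
under eq_bigr => x _ do rewrite permM.
rewrite (big_tperm (fun x y : 'I_n => beta x * v (s y))) ?neq_ltn ?hrp //= hsp.
nra.
Qed.

Definition gap_value (R : realFieldType) n (beta : nat -> R) (v : 'I_n -> R) p :=
  (beta p - beta p.+1) * vext v p.+1.

Section VCGRevenue.
Variables (R : realFieldType) (n k : nat) (beta : nat -> R) (v : 'I_n -> R).
Hypothesis hbeta : beta_ok k beta.
Hypothesis hv0 : forall i, 0 <= v i.
Hypothesis hv_sorted : forall i j : 'I_n, (i <= j)%N -> v j <= v i.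

Lemma welfare_others_le s i : welfare_others beta v s i <=
  \sum_(q < k) (beta q - beta q.+1) * prefix_sum_without v i q.+1.
Proof.
rewrite /welfare_others (sum_beta_layers hbeta (fun a => a != i) (pos s) v).
apply: ler_sum => q _; apply: (ler_wpM2l (beta_gap_ge0 hbeta q)).
apply: sum_le_prefix_sum_without => //; first by rewrite inE eqxx.
have : [set a | (a != i) && (pos s a <= q)%N] \subset [set a | (pos s a < q.+1)%N].
  by apply/subsetP => a; rewrite !inE ltnS => /andP [].
by move/subset_leq_card/leq_trans; apply; rewrite card_pos_lt geq_minl.
Qed.

Lemma opt_without_le i : opt_without beta v i <=
  \sum_(q < k) (beta q - beta q.+1) * prefix_sum_without v i q.+1.
Proof.
apply: bigmax_le => [|s _]; last exact: welfare_others_le.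
apply: le_trans (welfare_others_le 1%g i).
by apply: sumr_ge0 => a _; rewrite mulr_ge0 ?(beta_ge0 hbeta).
Qed.

Lemma sum_welfare_others s :
  \sum_i welfare_others beta v s i = (n%:R - 1) * welfare beta v s.
Proof.
transitivity (\sum_i (welfare beta v s - beta (pos s i) * v i)).
  by apply: eq_bigr => i _; rewrite /welfare (bigD1 i) //= addrC addrK.
by rewrite sumrB sumr_const card_ord -/(welfare beta v s) mulrBl mul1r mulr_natl.
Qed.

Lemma welfare_sorted :
  welfare beta v 1 = \sum_(q < k) (beta q - beta q.+1) * prefix_sum v q.+1.
Proof.
rewrite welfare_ranks; under eq_bigr => r _ do rewrite perm1.
rewrite (sum_beta_layers hbeta xpredT (@nat_of_ord n) v); apply: eq_bigr => q _.
by congr (_ * _); apply: eq_bigl => a; rewrite !inE ltnS.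
Qed.

Lemma vcg_revenue_le (hk : (0 < k)%N) (hkn : (k <= n)%N)
    (svcg : {perm 'I_n}) (hvcg : efficient beta v svcg) :
  vcg_revenue beta v svcg <= \sum_(q < k) q.+1%:R * gap_value beta v q.
Proof.
set w := fun q : nat => beta q - beta q.+1.
have hsum : \sum_i \sum_(q < k) w q * prefix_sum_without v i q.+1 =
    (n%:R - 1) * \sum_(q < k) w q * prefix_sum v q.+1 + \sum_(q < k) q.+1%:R * gap_value beta v q.
  rewrite exchange_big mulr_sumr -big_split /=; apply: eq_bigr => q _.
  rewrite -mulr_sumr sum_prefix_sum_without; last by have := ltn_ord q; lia.
  by rewrite /gap_value -/(w q); ring.
have hopt : \sum_i opt_without beta v i <= \sum_i \sum_(q < k) w q * prefix_sum_without v i q.+1.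
  by apply: ler_sum => i _; exact: opt_without_le.
rewrite hsum in hopt.
have hn : 1 <= n%:R :> R by rewrite ler1n (leq_trans hk hkn).
have hW := hvcg 1%g; rewrite welfare_sorted -/w in hW.
rewrite /vcg_revenue /clarke_payment sumrB sum_welfare_others.
nra.
Qed.

End VCGRevenue.

Definition rank_bid (R : realFieldType) n (b : 'I_n -> R) (s : {perm 'I_n}) (l : nat) : R :=
  match (insub l : option 'I_n) with Some l' => b (s l') | None => 0 end.

Section RankBids.
Variables (R : realFieldType) (n : nat) (b : 'I_n -> R) (s : {perm 'I_n}).

Lemma rank_bidE l (hl : (l < n)%N) : rank_bid b s l = b (s (Ordinal hl)).
Proof. by rewrite /rank_bid insubT. Qed.

Lemma rank_bid_ge0 l : (forall i, 0 <= b i) -> 0 <= rank_bid b s l.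
Proof. by move=> hb0; rewrite /rank_bid; case: insub. Qed.

Lemma next_bidE r : next_bid b s r = rank_bid b s r.+1.
Proof. by []. Qed.

Lemma next_bid_le_bid i : consistent_ranking b s -> 0 <= b i -> next_bid b s (pos s i) <= b i.
Proof.
move=> hs hbi; rewrite /next_bid; case: insubP => [r _ hr | _] //.
by have := hs (s^-1 i)%g r; rewrite hr /pos permKV; apply.
Qed.

End RankBids.

(* Whoever outbids the agent at rank [l] is ranked at position [l] or better: everyone ranked above
   it still bids at least as much, hence already was above rank [l]. *)
Lemma pos_outbid_le (R : realFieldType) n (tb : ('I_n -> R) -> {perm 'I_n}) (htb : tie_rule tb)
    (b : 'I_n -> R) (j l : 'I_n) (x : R) :
  b (tb b l) < x -> (pos (tb (upd b j x)) j <= l)%N.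
Proof.
move=> hx; set s' := tb (upd b j x).
have : [set a | (pos s' a < pos s' j)%N] \subset [set a | (pos (tb b) a < l)%N].
  apply/subsetP => a; rewrite !inE => ha.
  have haj : a != j by apply: contraTneq ha => ->; rewrite ltnn.
  have hxa : x <= b a.
    have := htb (upd b j x) _ _ (ltnW ha).
    by rewrite !permKV /upd eqxx (negbTE haj).
  rewrite ltnNge; apply: contraTN hx => hla; rewrite -leNgt.
  by apply: le_trans hxa _; have := htb b l _ hla; rewrite permKV.
move/subset_leq_card; rewrite !card_pos_lt.
by have := ltn_ord (s'^-1 j)%g; rewrite /pos; lia.
Qed.

Section AlternatingSums.
Variables (R : realFieldType) (n k : nat) (beta : nat -> R) (v : 'I_n -> R).

Definition alt_gap_sum l := \sum_(l <= p < k | ~~ odd (p - l)) gap_value beta v p.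

Lemma alt_gap_sum_out l : (k <= l)%N -> alt_gap_sum l = 0.
Proof. by move=> hl; rewrite /alt_gap_sum big_geq. Qed.

Lemma alt_gap_sumS l : (l < k)%N -> alt_gap_sum l = gap_value beta v l + alt_gap_sum l.+2.
Proof.
move=> hl; rewrite /alt_gap_sum (big_mkcond (fun p => ~~ odd (p - l))).
rewrite (big_mkcond (fun p => ~~ odd (p - l.+2))) big_ltn // subnn /=.
case: (ltnP l.+1 k) => hl1; last by rewrite !big_geq ?addr0 //; lia.
rewrite big_ltn // subSnn /= add0r; congr (_ + _).
apply: eq_big_nat => p /andP [hp _].
have -> : (p - l = (p - l.+2).+2)%N by lia.
by rewrite /= negbK.
Qed.

Lemma alt_gap_sum_pair l :
  alt_gap_sum l + alt_gap_sum l.+1 = \sum_(l <= p < k) gap_value beta v p.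
Proof.
case: (ltnP l k) => hl; last by rewrite !alt_gap_sum_out ?big_geq ?addr0 //; lia.
rewrite /alt_gap_sum (big_mkcond (fun p => ~~ odd (p - l))).
rewrite (big_mkcond (fun p => ~~ odd (p - l.+1))) big_ltn // subnn /= [RHS]big_ltn // -addrA.
congr (_ + _); rewrite -big_split /=; apply: eq_big_nat => p /andP [hp _].
have -> : (p - l = (p - l.+1).+1)%N by lia.
by rewrite /=; case: odd; rewrite ?add0r ?addr0.
Qed.

End AlternatingSums.

Lemma sum_tail_sums (R : realFieldType) (f : nat -> R) K :
  \sum_(r < K) \sum_(r.+1 <= p < K) f p = \sum_(p < K) p%:R * f p.
Proof.
elim: K => [|K IH]; first by rewrite !big_ord0.
rewrite big_ord_recr /= big_geq // addr0.
under eq_bigr => r _ do rewrite big_nat_recr //=.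
by rewrite big_split /= IH sumr_const card_ord [RHS]big_ord_recr /= mulr_natl.
Qed.

Section EfficientEquilibrium.
Variables (R : realFieldType) (n k : nat) (beta : nat -> R) (v : 'I_n -> R).
Variables (tb : ('I_n -> R) -> {perm 'I_n}) (b : 'I_n -> R).
Hypothesis hkn : (k <= n)%N.
Hypothesis hbeta : beta_ok k beta.
Hypothesis hv0 : forall i, 0 <= v i.
Hypothesis hv_sorted : forall i j : 'I_n, (i <= j)%N -> v j <= v i.
Hypothesis htb : tie_rule tb.
Hypothesis hne : gsp_nash k beta v tb b.
Hypothesis heff : efficient beta v (tb b).

Local Notation s := (tb b).

Lemma nash_utility_ge_outbid (j l : 'I_n) : (l < k)%N ->
  beta l * v j - b (s l) <= gsp_utility k beta v b s j.
Proof.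
move=> hlk; have [hb0 hnash] := hne.
apply/ler_addgt0Pr => e he.
set x := b (s l) + e.
have hx0 : 0 <= x by rewrite addr_ge0 ?hb0 // ltW.
set b' := upd b j x; set s' := tb b'.
have hpos : (pos s' j <= l)%N by apply: pos_outbid_le; rewrite // /x ltrDl.
have hpaid : next_bid b' s' (pos s' j) <= x.
  have hb'j : b' j = x by rewrite /b' /upd eqxx.
  by rewrite -hb'j; apply: next_bid_le_bid; rewrite ?hb'j.
have hslot : beta l * v j <= beta (pos s' j) * v j.
  by rewrite ler_wpM2r // (beta_nonincr hbeta).
have := hnash j x hx0; rewrite /gsp_utility -/b' -/s' ifT; last by lia.
by rewrite /x in hpaid *; lra.
Qed.

Lemma rank_bid_step l : (l.+1 < k)%N ->
  gap_value beta v l + rank_bid b s l.+2 <= rank_bid b s l.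
Proof.
move=> hl1; have hl1n : (l.+1 < n)%N by lia.
have hln : (l < n)%N by lia.
set j := s (Ordinal hl1n).
have hpj : pos s j = l.+1 by rewrite /pos /j permK.
have := nash_utility_ge_outbid j (l := Ordinal hln) (ltnW hl1).
rewrite /gsp_utility hpj hl1 next_bidE -(rank_bidE b s hln) /=.
have hvj : vext v l.+1 <= v j.
  by rewrite (vextE v hl1n); apply: (efficient_slot_value_ge hbeta hv_sorted heff).
have := beta_gap_ge0 hbeta l; rewrite /gap_value.
nra.
Qed.

Lemma rank_bid_last : (0 < k)%N -> gap_value beta v k.-1 <= rank_bid b s k.-1.
Proof.
move=> hk; have hlk : (k.-1 < k)%N by rewrite ltn_predL.
have hln : (k.-1 < n)%N by lia.
have [_ _ _ beta_out] := hbeta.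
rewrite /gap_value prednK // (beta_out k) // subr0.
case: (ltnP k n) => hkn'; last by rewrite vext_out // mulr0 rank_bid_ge0 //; case: hne.
have [a [hak hka]] := exists_prefix_agent_ranked_late s hkn'.
have := nash_utility_ge_outbid a (l := Ordinal hln) hlk.
rewrite /gsp_utility ltnNge hka -(rank_bidE b s hln) /=.
have hva : vext v k <= v a by rewrite (vextE v hkn'); apply: hv_sorted.
have := beta_ge0 hbeta k.-1.
nra.
Qed.

Lemma alt_gap_sum_le_rank_bid l : alt_gap_sum k beta v l <= rank_bid b s l.
Proof.
have hb0 := hne.1.
elim: (k - l)%N {-2}l (leqnn (k - l)) => [|d IH] {}l hd.
  by rewrite alt_gap_sum_out ?rank_bid_ge0 //; lia.
case: (ltnP l k) => hlk; last by rewrite alt_gap_sum_out ?rank_bid_ge0.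
rewrite alt_gap_sumS //; case: (ltnP l.+1 k) => hl1.
  by apply: le_trans (rank_bid_step hl1); rewrite lerD2l; apply: IH; lia.
have -> : l = k.-1 by lia.
by rewrite alt_gap_sum_out ?addr0 ?rank_bid_last //; lia.
Qed.

Lemma gsp_revenue_ge : (0 < k)%N ->
  \sum_(q < k) q%:R * gap_value beta v q <= 2 * gsp_revenue k b s.
Proof.
move=> hk; set S := alt_gap_sum k beta v.
have hS0 l : 0 <= S l.
  rewrite /S /alt_gap_sum; apply: sumr_ge0 => p _.
  by rewrite /gap_value mulr_ge0 ?(beta_gap_ge0 hbeta) ?vext_ge0.
have hrev : \sum_(r < k) S r.+1 <= gsp_revenue k b s.
  rewrite /gsp_revenue -(big_ord_widen n (fun r => next_bid b s r) hkn).
  by apply: ler_sum => r _; rewrite next_bidE alt_gap_sum_le_rank_bid.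
have hpairs : \sum_(q < k) q%:R * gap_value beta v q = \sum_(r < k) (S r.+1 + S r.+2).
  by rewrite -sum_tail_sums; apply: eq_bigr => r _; rewrite alt_gap_sum_pair.
have hshift : S 1 + \sum_(r < k) S r.+2 = \sum_(r < k) S r.+1 + S k.+1.
  by rewrite -(big_ord_recr k (fun r => S r.+1)) (big_ord_recl k (fun r => S r.+1)).
rewrite [S k.+1]alt_gap_sum_out // addr0 in hshift.
have := hS0 1%N; rewrite hpairs big_split /=; lra.
Qed.

End EfficientEquilibrium.

Theorem theorem2 (R : realFieldType) (n k : nat) (beta : nat -> R)
  (v : 'I_n -> R)
  (hk : (0 < k)%N) (hkn : (k <= n)%N)
  (hbeta : beta_ok k beta)
  (hv0 : forall i, 0 <= v i)
  (hsorted : forall i j : 'I_n, (i <= j)%N -> v j <= v i)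
  (svcg : {perm 'I_n}) (hvcg : efficient beta v svcg)
  (tb : ('I_n -> R) -> {perm 'I_n}) (htb : tie_rule tb)
  (b : 'I_n -> R) (hne : gsp_nash k beta v tb b)
  (heff : efficient beta v (tb b)) :
  (vcg_revenue beta v svcg
     - \sum_(j < k) (beta j - beta j.+1) * vext v j.+1) / 2
    <= gsp_revenue k b (tb b).
Proof.
have hgsp := gsp_revenue_ge hkn hbeta hv0 hsorted htb hne heff hk.
have hvcg_le := vcg_revenue_le hbeta hv0 hsorted hk hkn hvcg.
have hsplit : \sum_(q < k) q.+1%:R * gap_value beta v q =
    \sum_(q < k) q%:R * gap_value beta v q + \sum_(j < k) (beta j - beta j.+1) * vext v j.+1.
  by rewrite -big_split /=; apply: eq_bigr => q _; rewrite /gap_value -natr1; ring.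
lra.
Qed.
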